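(* Let $G$ be a torsion-free group, $\mathbb{F}$ a field, $\alpha$ a zero divisor in $\mathbb{F}[G]$ with $supp(\alpha)=\{1,x,y,xy\}$ where $x,y$ are distinct non-trivial elements of $G$, and let $\beta$ be a mate of $\alpha$. Then $|supp(\alpha)supp(\beta)|\le 2|supp(\beta)|-2$.
   Context: $supp(\gamma)=\{x\in G:\gamma_x\ne0\}$; for subsets $B,C\subseteq G$, $BC=\{bc:b\in B,c\in C\}$. A mate of $\alpha$ is a non-zero $\beta$ with $\alpha\beta=0$ such that $|supp(\beta)|\le|supp(\beta')|$ for every non-zero $\beta'$ with $\alpha\beta'=0$. *)

From HB Require Import structures.
From mathcomp Require Import all_boot all_order all_algebra.
From mathcomp Require Export finmap.
Set Implicit Arguments. Unset Strict Implicit. Unset Printing Implicit Defensive.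
Import GRing.Theory.
Local Open Scope fset_scope.

Record group_laws (G : choiceType) (mul : G -> G -> G) (one : G) (inv : G -> G)
  : Prop := GroupLaws {
  g_assoc : forall a b c, mul a (mul b c) = mul (mul a b) c;
  g_mul1 : forall a, mul one a = a;
  g_1mul : forall a, mul a one = a;
  g_mulV : forall a, mul (inv a) a = one;
  g_Vmul : forall a, mul a (inv a) = one }.

Definition gpow (G : Type) (mul : G -> G -> G) (one : G) (g : G) (n : nat) : G :=
  iter n (mul g) one.

Definition torsion_free (G : choiceType) (mul : G -> G -> G) (one : G) : Prop :=
  forall (g : G) (n : nat), gpow mul one g n.+1 = one -> g = one.

Record grpalg (G : choiceType) (F : nzRingType) := GrpAlg {
  ga_fun :> G -> F;
  supp : {fset G};
  suppP : forall g, (g \in supp) = (ga_fun g != 0%R) }.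

Definition ga_mul_at (G : choiceType) (F : nzRingType) (mul : G -> G -> G)
  (inv : G -> G) (a b : grpalg G F) (g : G) : F :=
  (\sum_(h <- supp a) a h * b (mul (inv h) g))%R.

Definition ga_mul_eq0 (G : choiceType) (F : nzRingType) (mul : G -> G -> G)
  (inv : G -> G) (a b : grpalg G F) : Prop :=
  forall g, ga_mul_at mul inv a b g = 0%R.

Definition ga_nonzero (G : choiceType) (F : nzRingType) (a : grpalg G F) : Prop :=
  supp a != fset0.

Definition zero_divisor (G : choiceType) (F : nzRingType) (mul : G -> G -> G)
  (inv : G -> G) (a : grpalg G F) : Prop :=
  ga_nonzero a /\ exists c : grpalg G F,
    ga_nonzero c /\ (ga_mul_eq0 mul inv a c \/ ga_mul_eq0 mul inv c a).

Definition mate (G : choiceType) (F : nzRingType) (mul : G -> G -> G)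
  (inv : G -> G) (a b : grpalg G F) : Prop :=
  ga_nonzero b /\ ga_mul_eq0 mul inv a b /\
  forall b' : grpalg G F, ga_nonzero b' -> ga_mul_eq0 mul inv a b' ->
    #|` supp b| <= #|` supp b'|.

Definition setmul (G : choiceType) (mul : G -> G -> G) (B C : {fset G}) : {fset G} :=
  [fset mul b c | b in B, c in C].

From mathcomp Require Import all_boot all_order all_algebra.
From mathcomp Require Import finmap zify ring.
From Stdlib Require Import Classical.
Set Implicit Arguments. Unset Strict Implicit. Unset Printing Implicit Defensive.
Import GRing.Theory.
Local Open Scope fset_scope.

(* Write α = (a_1 + a_y y) + x (a_x + a_xy y) and put γ = (a_1 + a_y y) β and
   δ = (a_x + a_xy y) β, so that αβ = 0 reads γ = - x δ.  With B = supp β,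
   D = B ∪ yB and I = B ∩ yB, both γ and δ vanish off D and neither vanishes on
   D \ I, while supp γ = x supp δ.  Hence supp(α) B = D ∪ xD has at most
   |D| + |I \ supp γ| = 2|B| - |I ∩ supp γ| elements, and it remains to find two
   points of I in supp γ.  As |supp γ| = |supp δ| and both supports contain D \ I,
   otherwise either supp γ = supp δ is a nonempty finite x-stable set, which
   torsion-freeness forbids, or x shifts D along a single segment of an x-orbit
   starting in I; then y moves a point of I into that segment, so y is a power of
   x.  That case, like xy = 1, makes α a Laurent polynomial in x, which is not a
   zero divisor by a leading-term argument. *)

Lemma card_fsetU_le (K : choiceType) (A C : {fset K}) :
  #|` C| <= #|` A| -> #|` A `|` C| <= #|` A| + #|` A `\` C|.
Proof. by have := cardfsUI A C; have := cardfsID C A; lia. Qed.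

Lemma ga_eq0 (G : choiceType) (F : nzRingType) (a : grpalg G F) g :
  g \notin supp a -> a g = 0%R.
Proof. by rewrite suppP negbK => /eqP. Qed.

Section Group.

Variables (G : choiceType) (mul : G -> G -> G) (one : G) (inv : G -> G).
Hypothesis GL : group_laws mul one inv.
Local Notation pow := (gpow mul one).

Let mulgA := g_assoc GL.

Lemma mulKg a b : mul (inv a) (mul a b) = b.
Proof. by rewrite mulgA (g_mulV GL) (g_mul1 GL). Qed.

Lemma mulVKg a b : mul a (mul (inv a) b) = b.
Proof. by rewrite mulgA (g_Vmul GL) (g_mul1 GL). Qed.

Lemma mulgI a : injective (mul a).
Proof. by move=> b c E; rewrite -(mulKg a b) E mulKg. Qed.

Lemma mulIg a : injective (mul^~ a).
Proof.
move=> b c E.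
by rewrite -(g_1mul GL b) -(g_Vmul GL a) mulgA E -mulgA (g_Vmul GL) (g_1mul GL).
Qed.

Lemma invg_eq u w : mul u w = one -> inv w = u.
Proof. by move=> E; apply: (@mulIg w); rewrite E (g_mulV GL). Qed.

Lemma invg1 : inv one = one.
Proof. exact/invg_eq/(g_mul1 GL). Qed.

Lemma invMg u w : inv (mul u w) = mul (inv w) (inv u).
Proof. by apply: invg_eq; rewrite -mulgA mulKg (g_mulV GL). Qed.

Lemma gpow1 z : pow z 1 = z.
Proof. exact: (g_1mul GL). Qed.

Lemma gpowD z m n : pow z (m + n) = mul (pow z m) (pow z n).
Proof.
elim: m => [|m IH]; first by rewrite (g_mul1 GL).
by rewrite addSn /= IH mulgA.
Qed.

Lemma gpowSr z n : pow z n.+1 = mul (pow z n) z.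
Proof. by rewrite -addn1 gpowD gpow1. Qed.

Lemma mul_gpowD z m n c : mul (pow z m) (mul (pow z n) c) = mul (pow z (m + n)) c.
Proof. by rewrite gpowD mulgA. Qed.

Lemma gpowS_mul z n c : mul z (mul (pow z n) c) = mul (pow z n.+1) c.
Proof. exact: mulgA. Qed.

Lemma uniq_one_x_y_xy x y : x != one -> y != one -> x != y -> mul x y != one ->
  uniq [:: one; x; y; mul x y].
Proof.
move=> x1 y1 xy xy1; rewrite /= !inE !negb_or ![one == _]eq_sym x1 y1 xy xy1 /= andbT.
apply/andP; split; apply/eqP.
  by rewrite -{1}(g_1mul GL x) => /mulgI /esym/eqP; rewrite (negbTE y1).
by rewrite -{1}(g_mul1 GL y) => /mulIg /esym/eqP; rewrite (negbTE x1).
Qed.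

Lemma ga_mul_at_four (F : nzRingType) (a b : grpalg G F) x y g :
  supp a = [fset one; x; y; mul x y] -> uniq [:: one; x; y; mul x y] ->
  ga_mul_at mul inv a b g = (a one * b g + a x * b (mul (inv x) g) +
    a y * b (mul (inv y) g) + a (mul x y) * b (mul (inv (mul x y)) g))%R.
Proof.
move=> Sa uniq_a; rewrite /ga_mul_at Sa (perm_big [:: one; x; y; mul x y]).
  by rewrite !big_cons big_nil /= invg1 (g_mul1 GL) addr0 !addrA.
by apply: uniq_perm => // h; rewrite !inE !orbA.
Qed.

Hypothesis TF : torsion_free mul one.

Section Shift.

Variable z : G.
Hypothesis z_neq1 : z != one.

Lemma gpow_mul_inj c : injective (fun k => mul (pow z k) c).
Proof.
suff lt_neq i j : i < j -> mul (pow z i) c <> mul (pow z j) c.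
  by move=> i j E; case: (ltngtP i j) => // /lt_neq; rewrite E.
move=> /subnKC <- /mulIg; rewrite addSnnS gpowD -{1}(g_1mul GL (pow z i)).
by move=> /mulgI /esym /TF /eqP; rewrite (negbTE z_neq1).
Qed.

Lemma gpow_mem_bounded (s : seq G) c :
  exists N, forall k, mul (pow z k) c \in s -> k < N.
Proof.
elim: s => [|s0 s [N ltN]]; first by exists 0.
have [[k0 E0]|no_k0] := classic (exists k0, mul (pow z k0) c = s0).
  exists (maxn N k0.+1) => k; rewrite inE leq_max -E0.
  by case/orP => [/eqP/gpow_mul_inj ->|/ltN ->]; rewrite ?ltnSn ?orbT.
by exists N => k; rewrite inE => /orP [/eqP E|/ltN //]; case: no_k0; exists k.
Qed.

Lemma gpow_mem_max (S : {fset G}) c : c \in S ->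
  exists k, mul (pow z k) c \in S /\ forall n, k < n -> mul (pow z n) c \notin S.
Proof.
move=> cS; have [N ltN] := gpow_mem_bounded S c.
have exP : exists k, mul (pow z k) c \in S by exists 0; rewrite (g_mul1 GL).
have ubP k : mul (pow z k) c \in S -> k <= N by move/ltN/ltnW.
case: (ex_maxnP exP ubP) => k kS k_max; exists k; split=> // n.
by rewrite ltnNge; apply: contraNN => /k_max.
Qed.

Lemma mul_closed_fset0 (S : {fset G}) : {in S, forall c, mul z c \in S} -> S = fset0.
Proof.
move=> zS; apply/eqP/fset0Pn => -[c /gpow_mem_max [k [kS /(_ k.+1 (ltnSn k))]]].
by rewrite -gpowS_mul zS.
Qed.

Lemma mul_chain_orbit (D : {fset G}) e1 e2 : e1 \in D ->
  {in D, forall d, d != e2 -> mul z d \in D /\ mul z d != e1} ->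
  {in D, forall d, exists i, d = mul (pow z i) e1}.
Proof.
move=> e1D step; have [k [kD k_max]] := gpow_mem_max e1D.
have ke2 : mul (pow z k) e1 = e2.
  apply/eqP; apply: contraT => /(step _ kD) [+ _].
  by rewrite gpowS_mul (negbTE (k_max _ (ltnSn k))).
(* The rest of D, off the segment e1, z e1, ..., z^k e1 = e2, is z-stable. *)
pose O := [seq mul (pow z i) e1 | i <- iota 0 k.+1].
set R := [fset d in D | d \notin O].
have memR d : (d \in R) = (d \in D) && (d \notin O) by rewrite in_fset inE.
suff R0 : R = fset0.
  move=> d dD; have : d \notin R by rewrite R0.
  by rewrite memR dD negbK => /mapP [i _ ->]; exists i.
apply: mul_closed_fset0 => q; rewrite !memR => /andP [qD qO].
have qe2 : q != e2.
  apply: contraNneq qO => ->; apply/mapP; exists k => //.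
  by rewrite mem_iota add0n ltnSn.
have [-> zq_e1] := step q qD qe2; apply/mapP => -[[|i]]; rewrite mem_iota => /= lt_i.
  by rewrite (g_mul1 GL) => /eqP; rewrite (negbTE zq_e1).
rewrite -gpowS_mul => /mulgI E; apply/negP: qO; apply/negPn/mapP.
by exists i; rewrite // mem_iota /= ltnW.
Qed.

Lemma card_fsetI_shift (I P Q : {fset G}) : P `\` I = Q `\` I ->
  (forall g, (mul z g \in P) = (g \in Q)) -> #|` P `&` I| = #|` Q `&` I|.
Proof.
move=> PQI zPQ; have : #|` P| = #|` Q|.
  have <- : #|` [fset mul z q | q in Q]| = #|` Q| by rewrite card_imfset //; apply: mulgI.
  congr #|` _|; apply/fsetP => g; apply/idP/imfsetP => [gP|[q qQ ->]].
    by exists (mul (inv z) g); rewrite ?mulVKg // -zPQ mulVKg.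
  by rewrite zPQ.
by rewrite -(cardfsID I P) -(cardfsID I Q) PQI => /addIn.
Qed.

Lemma card_fsetI_ge2_or_orbit (D I P Q : {fset G}) :
  D != fset0 -> P `<=` D -> Q `<=` D -> P `\` I = D `\` I -> Q `\` I = D `\` I ->
  I `<=` P `|` Q -> (forall g, (mul z g \in P) = (g \in Q)) ->
  2 <= #|` P `&` I| \/
  exists2 e, e \in I & {in D, forall d, exists i, d = mul (pow z i) e}.
Proof.
move=> D_neq0 PD QD PDI QDI I_PQ zPQ.
have cardPI : #|` P `&` I| = #|` Q `&` I|.
  by apply: card_fsetI_shift zPQ; rewrite PDI QDI.
have [le2|] := leqP 2 #|` P `&` I|; [by left | rewrite ltnS => le1; right].
have [PQI|] := eqVneq (P `&` I) (Q `&` I).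
  have PQ : P = Q by rewrite -(fsetID I P) -(fsetID I Q) PQI PDI QDI.
  have P0 : P = fset0 by apply: mul_closed_fset0 => g; rewrite zPQ PQ.
  case/fset0Pn: D_neq0 => d dD; case: (boolP (d \in I)) => dI.
    by have := fsubsetP I_PQ d dI; rewrite -PQ P0 fsetUid inE.
  have : d \in D `\` I by rewrite inE dI dD.
  by rewrite -PDI P0 !inE andbF.
move=> neqPQI; have PI1 : #|` P `&` I| = 1.
  move: le1; rewrite leq_eqVlt ltnS leqn0 => /orP[/eqP //|/eqP PI0].
  move: neqPQI; rewrite (cardfs0_eq PI0) (cardfs0_eq (etrans (esym cardPI) PI0)).
  by rewrite eqxx.
have /cardfs1P [e2 E2] : #|` P `&` I| == 1 by rewrite PI1.
have /cardfs1P [e1 E1] : #|` Q `&` I| == 1 by rewrite -cardPI PI1.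
have : e1 \in Q `&` I by rewrite E1 inE.
rewrite in_fsetI => /andP [e1Q e1I].
have e1P : e1 \notin P.
  apply: contra neqPQI => e1P; have : e1 \in P `&` I by rewrite inE e1P e1I.
  by rewrite E1 E2 inE => /eqP ->.
exists e1 => //; apply: (mul_chain_orbit (e2 := e2)); first exact: (fsubsetP QD).
move=> d dD de2; have dQ : d \in Q.
  case: (boolP (d \in I)) => dI.
    have := fsubsetP I_PQ d dI; rewrite inE => /orP[dP|//].
    have : d \in P `&` I by rewrite inE dP dI.
    by rewrite E2 inE (negbTE de2).
  have : d \in D `\` I by rewrite inE dI dD.
  by rewrite -QDI inE => /andP[].
have zdP : mul z d \in P by rewrite zPQ.
by split; [exact: (fsubsetP PD) | apply: contraNneq e1P => <-].
Qed.

Lemma ga_mul_neq0_top (F : idomainType) (a b : grpalg G F) h0 : h0 \in supp a ->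
  {in supp a, forall h, h != h0 -> exists m, mul (inv h) h0 = pow z m.+1} ->
  ga_nonzero b -> ~ ga_mul_eq0 mul inv a b.
Proof.
(* At h0 c, for c topmost in supp b along z, only the term a h0 * b c survives. *)
move=> h0a h0_top /fset0Pn [c0 /gpow_mem_max [k [kb k_max]]] ab0.
have := ab0 (mul h0 (mul (pow z k) c0)).
rewrite /ga_mul_at (big_fsetD1 _ h0a) /= big1_fset.
  by rewrite mulKg addr0; apply/eqP; rewrite mulf_neq0 // -suppP.
move=> h; rewrite in_fsetD1 => /andP [hh0 ha] _; have [m Eh] := h0_top h ha hh0.
rewrite mulgA Eh mul_gpowD (@ga_eq0 _ _ b) ?mulr0 // k_max //.
by rewrite addSn ltnS leq_addl.
Qed.

End Shift.

Lemma ga_mul_neq0_inv_pair (F : idomainType) (a b : grpalg G F) x y :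
  x != one -> mul x y = one -> supp a = [fset one; x; y; mul x y] ->
  ga_nonzero b -> ~ ga_mul_eq0 mul inv a b.
Proof.
move=> x1 xy1 Sa; apply: (ga_mul_neq0_top x1 (h0 := x)).
  by rewrite Sa !inE eqxx orbT.
move=> h; rewrite Sa xy1 !inE -!orbA => /or4P [] /eqP -> hx.
- by exists 0; rewrite invg1 (g_mul1 GL) gpow1.
- by rewrite eqxx in hx.
- by exists 1; rewrite (invg_eq xy1) /= (g_1mul GL).
- by exists 0; rewrite invg1 (g_mul1 GL) gpow1.
Qed.

Lemma ga_mul_neq0_power (F : idomainType) (a b : grpalg G F) x y n :
  x != one -> y = pow x n.+1 -> supp a = [fset one; x; y; mul x y] ->
  ga_nonzero b -> ~ ga_mul_eq0 mul inv a b.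
Proof.
move=> x1 -> Sa; apply: (ga_mul_neq0_top x1 (h0 := mul x (pow x n.+1))).
  by rewrite Sa !inE eqxx !orbT.
move=> h; rewrite Sa !inE -!orbA => /or4P [] /eqP -> hx.
- by exists n.+1; rewrite invg1 (g_mul1 GL).
- by exists n; rewrite mulKg.
- have -> : mul x (pow x n.+1) = mul (pow x n.+1) x by exact (gpowSr x n.+1).
  by exists 0; rewrite mulKg gpow1.
- by rewrite eqxx in hx.
Qed.

Section FourTerm.

Variables (F : idomainType) (x y : G) (a1 ax ay axy : F) (b : grpalg G F).
Hypotheses (x_neq1 : x != one) (y_npow : forall n, y != pow x n).
Hypotheses (a1_neq0 : a1 != 0%R) (ax_neq0 : ax != 0%R).
Hypotheses (ay_neq0 : ay != 0%R) (axy_neq0 : axy != 0%R).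
Hypothesis b_neq0 : ga_nonzero b.
Hypothesis ab0 : forall g, (a1 * b g + ax * b (mul (inv x) g) +
  ay * b (mul (inv y) g) + axy * b (mul (inv (mul x y)) g) = 0)%R.

Local Notation B := (supp b).
Local Notation yB := [fset mul y c | c in B].
Local Notation D := (B `|` yB).
Local Notation I := (B `&` yB).
Local Notation gam g := (a1 * b g + ay * b (mul (inv y) g))%R.
Local Notation del g := (ax * b g + axy * b (mul (inv y) g))%R.
Local Notation Sgam := [fset g in D | gam g != 0%R].
Local Notation Sdel := [fset g in D | del g != 0%R].

Lemma mem_yB g : (g \in yB) = (mul (inv y) g \in B).
Proof.
apply/imfsetP/idP => [[c cB ->]|]; first by rewrite mulKg.
by exists (mul (inv y) g); rewrite ?mulVKg.
Qed.

Lemma gam_add_del g : (gam g + del (mul (inv x) g) = 0)%R.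
Proof. by rewrite -(ab0 g) invMg -mulgA; ring. Qed.

Lemma gam_del_eq0 g : g \notin D -> gam g = 0%R /\ del g = 0%R.
Proof.
rewrite in_fsetU negb_or mem_yB => /andP [gB gyB].
by rewrite !ga_eq0 // !mulr0 addr0.
Qed.

Lemma gam_del_neq0 g : g \in D -> g \notin I -> gam g != 0%R /\ del g != 0%R.
Proof.
rewrite in_fsetU in_fsetI !mem_yB.
case: (boolP (g \in B)) => gB; case: (boolP (mul (inv y) g \in B)) => //= gyB _ _.
  by rewrite (ga_eq0 gyB) !mulr0 !addr0 !mulf_neq0 // -suppP.
by rewrite (ga_eq0 gB) !mulr0 !add0r !mulf_neq0 // -suppP.
Qed.

Lemma mem_Sgam g : (g \in Sgam) = (gam g != 0%R).
Proof.
rewrite in_fset inE /=; case: (boolP (g \in D)) => //= gD.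
by have [-> _] := gam_del_eq0 gD; rewrite eqxx.
Qed.

Lemma mem_Sdel g : (g \in Sdel) = (del g != 0%R).
Proof.
rewrite in_fset inE /=; case: (boolP (g \in D)) => //= gD.
by have [_ ->] := gam_del_eq0 gD; rewrite eqxx.
Qed.

Lemma mem_Sgam_mulx g : (mul x g \in Sgam) = (g \in Sdel).
Proof.
rewrite mem_Sgam mem_Sdel; have /eqP := gam_add_del (mul x g).
by rewrite mulKg addr_eq0 => /eqP ->; rewrite oppr_eq0.
Qed.

Lemma yB_not_sub : ~~ (yB `<=` B).
Proof.
apply: contra b_neq0 => /fsubsetP yB_B; apply/eqP/(mul_closed_fset0 (y_npow 0)).
by move=> c cB; apply: yB_B; rewrite mem_yB mulKg.
Qed.

Lemma Sgam_eq_Sdel_of_det0 : (a1 * axy = ay * ax)%R -> Sgam = Sdel.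
Proof.
move=> det0; apply/fsetP => g; rewrite mem_Sgam mem_Sdel.
have : (a1 * del g - ax * gam g = (a1 * axy - ay * ax) * b (mul (inv y) g))%R by ring.
rewrite det0 subrr mul0r => /eqP; rewrite subr_eq0 => /eqP E.
have := mulf_eq0 ax (gam g); have := mulf_eq0 a1 (del g).
by rewrite E (negbTE a1_neq0) (negbTE ax_neq0) /= => <- <-.
Qed.

Lemma I_sub_Sgam_Sdel : (a1 * axy != ay * ax)%R -> I `<=` Sgam `|` Sdel.
Proof.
move=> det; apply/fsubsetP => g.
rewrite in_fsetI in_fsetU mem_Sgam mem_Sdel => /andP [gB _].
apply: contraLR gB; rewrite negb_or !negbK suppP negbK => /andP [/eqP g0 /eqP d0].
have : ((a1 * axy - ay * ax) * b g = axy * gam g - ay * del g)%R by ring.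
rewrite g0 d0 !mulr0 subrr => /eqP.
by rewrite mulf_eq0 subr_eq0 (negbTE det).
Qed.

Lemma card_setmul_le :
  #|` setmul mul [fset one; x; y; mul x y] B| <= 2 * #|` B| - #|` Sgam `&` I|.
Proof.
set xD := [fset mul x d | d in D].
have sub_DxD : setmul mul [fset one; x; y; mul x y] B `<=` D `|` xD.
  apply/fsubsetP => _ /imfset2P [h h_a [c cB ->]]; rewrite in_fsetU.
  have cD : c \in D by rewrite in_fsetU cB.
  have ycD : mul y c \in D by rewrite in_fsetU mem_yB mulKg cB orbT.
  rewrite !inE -!orbA in h_a; case/or4P: h_a => /eqP ->.
  - by rewrite (g_mul1 GL) cD.
  - by apply/orP; right; apply: in_imfset.
  - by rewrite ycD.
  - by rewrite -mulgA; apply/orP; right; apply: in_imfset.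
have DxD_IP : D `\` xD `<=` I `\` Sgam.
  apply/fsubsetP => g; rewrite in_fsetD => /andP [gxD gD].
  have gam0 : gam g = 0%R.
    have : mul (inv x) g \notin D.
      by apply: contra gxD => ?; apply/imfsetP; exists (mul (inv x) g); rewrite ?mulVKg.
    by case/gam_del_eq0 => _ d0; have := gam_add_del g; rewrite d0 addr0.
  rewrite in_fsetD mem_Sgam gam0 eqxx /=; apply: contraT => gI.
  by have [] := gam_del_neq0 gD gI; rewrite gam0 eqxx.
have cxD : #|` xD| <= #|` D| by apply: leq_imfset_card.
have cyB : #|` yB| <= #|` B| by apply: leq_imfset_card.
have := fsubset_leq_card sub_DxD; have := card_fsetU_le cxD.
have := fsubset_leq_card DxD_IP; have := cardfsUI B yB; have := cardfsID Sgam I.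
rewrite fsetIC; lia.
Qed.

Lemma two_le_card_Sgam_I : 2 <= #|` Sgam `&` I|.
Proof.
have SgamD : Sgam `<=` D by apply: fset_sub.
have SdelD : Sdel `<=` D by apply: fset_sub.
have SgamDI : Sgam `\` I = D `\` I.
  apply/fsetP => g; rewrite !in_fsetD mem_Sgam; case: (boolP (g \in I)) => //= gI.
  case: (boolP (g \in D)) => gD; first by have [] := gam_del_neq0 gD gI.
  by have [-> _] := gam_del_eq0 gD; rewrite eqxx.
have SdelDI : Sdel `\` I = D `\` I.
  apply/fsetP => g; rewrite !in_fsetD mem_Sdel; case: (boolP (g \in I)) => //= gI.
  case: (boolP (g \in D)) => gD; first by have [] := gam_del_neq0 gD gI.
  by have [_ ->] := gam_del_eq0 gD; rewrite eqxx.
have [det0|det] := eqVneq (a1 * axy)%R (ay * ax)%R.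
  have Sgam0 : Sgam = fset0.
    apply: (mul_closed_fset0 x_neq1) => g.
    by rewrite mem_Sgam_mulx -(Sgam_eq_Sdel_of_det0 det0).
  have /fsubsetPn [g gyB gB] := yB_not_sub.
  have : g \in D `\` I by rewrite in_fsetD in_fsetI in_fsetU gyB (negbTE gB) orbT.
  by rewrite -SgamDI Sgam0 !inE andbF.
have D_neq0 : D != fset0.
  by apply: contra b_neq0 => /eqP D0; rewrite -fsubset0 -D0 fsubsetUl.
have [//|[e eI e_orbit]] := card_fsetI_ge2_or_orbit x_neq1 D_neq0 SgamD SdelD
  SgamDI SdelDI (I_sub_Sgam_Sdel det) mem_Sgam_mulx.
have /andP [eB _] : (e \in B) && (e \in yB) by rewrite -in_fsetI.
have [i /mulIg yi] : exists i, mul y e = mul (pow x i) e.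
  by apply: e_orbit; rewrite in_fsetU mem_yB mulKg eB orbT.
by have := y_npow i; rewrite yi eqxx.
Qed.

Lemma card_setmul_four : #|` setmul mul [fset one; x; y; mul x y] B| <= 2 * #|` B| - 2.
Proof. by have := card_setmul_le; have := two_le_card_Sgam_I; lia. Qed.

End FourTerm.

End Group.

Theorem mainTheorem15 (G : choiceType) (mul : G -> G -> G) (one : G)
  (inv : G -> G) (F : fieldType) (a b : grpalg G F) (x y : G) :
  group_laws mul one inv ->
  torsion_free mul one ->
  zero_divisor mul inv a ->
  supp a = [fset one; x; y; mul x y] ->
  x != y -> x != one -> y != one ->
  mate mul inv a b ->
  #|` setmul mul (supp a) (supp b)| <= 2 * #|` supp b| - 2.
Proof.
move=> GL TF _ Sa xy x1 y1 [b_neq0 [ab0 _]].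
have [xy1|xy_neq1] := eqVneq (mul x y) one.
  by case: (ga_mul_neq0_inv_pair GL TF x1 xy1 Sa b_neq0).
have [[[|n] yn]|y_npow] := classic (exists n, y = gpow mul one x n).
- by rewrite yn eqxx in y1.
- by case: (ga_mul_neq0_power GL TF x1 yn Sa b_neq0).
have mem_a h : h \in [fset one; x; y; mul x y] -> a h != 0%R by rewrite -Sa suppP.
rewrite Sa; apply: (card_setmul_four GL TF x1 _ (mem_a one _) (mem_a x _) (mem_a y _)
  (mem_a (mul x y) _) b_neq0) => [n|||||g]; try by rewrite !inE eqxx ?orbT.
  by apply: contra_not_neq y_npow; exists n.
by rewrite -(ab0 g) (ga_mul_at_four GL _ _ Sa) ?(uniq_one_x_y_xy GL).
Qed.
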